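(* Consider a power allocation game (PAG) as described in the context. Let $\mathbf n_0\subseteq\mathbf n$ be a nonempty set of countries such that for every $i\in\mathbf n_0$, $$\mathcal A_i\cap\mathbf n_0=\emptyset\qquad\text{and}\qquad p_i\ \ge\ \sum_{j\in\mathcal A_i}p_j .$$ Then for every Nash equilibrium $U^*\in\mathcal U^*$ and every $i\in\mathbf n_0$ we have $\sigma_i(U^* )\ge\tau_i(U^* )$, i.e. every country in $\mathbf n_0$ survives at every Nash equilibrium.
   Context: Power allocation game (PAG). There are $n$ countries labelled by $\mathbf n=\{1,\dots,n\}$; country $i$ has total power $p_i\ge 0$. Each country $i$ has a set of friends $\mathcal F_i\subseteq\mathbf n$ and a set of adversaries $\mathcal A_i\subseteq\mathbf n$; the sets $\{i\}$, $\mathcal F_i$, $\mathcal A_i$ are pairwise disjoint, and the relations are symmetric ($j\in\mathcal F_i\iff i\in\mathcal F_j$, $j\in\mathcal A_i\iff i\in\mathcal A_j$). An admissible power allocation matrix is a real $n\times n$ matrix $U=[u_{ij}]$ with $u_{ij}\ge0$, $u_{ij}=0$ whenever $j\notin\{i\}\cup\mathcal F_i\cup\mathcal A_i$, and $\sum_{j=1}^n u_{ij}=p_i$ for every $i$. Row $i$ is country $i$'s strategy: $u_{ii}$ is power kept in reserve, $u_{ij}$ ($j\in\mathcal F_i$) is support given to friend $j$, $u_{ij}$ ($j\in\mathcal A_i$) is offense against adversary $j$. $\mathcal U$ is the set of admissible matrices. The support of $i$ is $\sigma_i(U)=u_{ii}+\sum_{j\in\mathcal F_i}u_{ji}+\sum_{j\in\mathcal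 A_i}u_{ij}$ and the threat to $i$ is $\tau_i(U)=\sum_{j\in\mathcal A_i}u_{ji}$. The state $x_i(U)$ is ''safe'' if $\sigma_i(U)>\tau_i(U)$, ''precarious'' if $\sigma_i(U)=\tau_i(U)$, ''unsafe'' if $\sigma_i(U)<\tau_i(U)$; country $i$ survives at $U$ if it is safe or precarious. Preferences. For $U,V\in\mathcal U$, country $i$ weakly prefers $V$ to $U$ (written $U\preceq_i V$) iff (a) for all $j\in\{i\}\cup\mathcal F_i$: $x_j(V)\in\{\text{safe},\text{precarious}\}$ or $x_j(U)=\text{unsafe}$; and (b) for all $j\in\mathcal A_i$: $x_j(V)\in\{\text{unsafe},\text{precarious}\}$ or $x_j(U)=\text{safe}$. Country $i$ strictly prefers $V$ to $U$ (written $U\prec_i V$) iff either $i$ survives at $V$ and is unsafe at $U$ (priority of self-survival), or $U\preceq_i V$ holds and $V\preceq_i U$ fails. Nash equilibrium. $U^*\in\mathcal U$ is a (pure strategy) Nash equilibrium if no country has a profitable unilateral deviation: for every $i\in\mathbf n$ and every $V\in\mathcal U$ differing from $U^*$ only in row $i$, it is not the case that $U^*\prec_i V$. $\mathcal U^*$ denotes the set of Nash equilibria. *)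

From HB Require Import structures.
From mathcomp Require Import all_boot all_order all_algebra.
Set Implicit Arguments. Unset Strict Implicit. Unset Printing Implicit Defensive.
Import Order.TTheory GRing.Theory Num.Theory.
Local Open Scope ring_scope.

Section PAG.
Variables (R : realFieldType) (n : nat).
Variables (p : 'I_n -> R) (F A : 'I_n -> {set 'I_n}).

Definition pag_wf : Prop :=
  (forall i, 0 <= p i) /\
  (forall i, i \notin F i) /\
  (forall i, i \notin A i) /\
  (forall i, [disjoint F i & A i]) /\
  (forall i j, (j \in F i) = (i \in F j)) /\
  (forall i j, (j \in A i) = (i \in A j)).

Definition admissible (U : 'M[R]_n) : Prop :=
  [/\ forall i j, 0 <= U i j,
      forall i j, j != i -> j \notin F i -> j \notin A i -> U i j = 0
    & forall i, \sum_(j < n) U i j = p i].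

Definition sigma (U : 'M[R]_n) (i : 'I_n) : R :=
  U i i + \sum_(j in F i) U j i + \sum_(j in A i) U i j.

Definition tau (U : 'M[R]_n) (i : 'I_n) : R :=
  \sum_(j in A i) U j i.

Inductive state := Safe | Precarious | Unsafe.

Definition xstate (U : 'M[R]_n) (i : 'I_n) : state :=
  if tau U i < sigma U i then Safe
  else if sigma U i == tau U i then Precarious else Unsafe.

Definition survives (U : 'M[R]_n) (i : 'I_n) : Prop :=
  xstate U i = Safe \/ xstate U i = Precarious.

Definition weak_pref (i : 'I_n) (U V : 'M[R]_n) : Prop :=
  (forall j, (j == i) || (j \in F i) ->
     (xstate V j = Safe \/ xstate V j = Precarious) \/ xstate U j = Unsafe) /\
  (forall j, j \in A i ->
     (xstate V j = Unsafe \/ xstate V j = Precarious) \/ xstate U j = Safe).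

Definition strict_pref (i : 'I_n) (U V : 'M[R]_n) : Prop :=
  (survives V i /\ xstate U i = Unsafe) \/
  (weak_pref i U V /\ ~ weak_pref i V U).

Definition differs_only_in_row (i : 'I_n) (U V : 'M[R]_n) : Prop :=
  forall k j, k != i -> V k j = U k j.

Definition nash_eq (U : 'M[R]_n) : Prop :=
  admissible U /\
  forall i V, admissible V -> differs_only_in_row i U V -> ~ strict_pref i U V.

End PAG.

(* A country that is unsafe at an equilibrium could always deviate to keeping
   all of its power in reserve.  Its support is then at least p_i, while the
   threat against it is at most the total power of its adversaries, so it
   survives; by the priority of self-survival this deviation is profitable,
   contradicting the equilibrium. *)
From HB Require Import structures.
From mathcomp Require Import all_boot all_order all_algebra.
Set Implicit Arguments. Unset Strict Implicit. Unset Printing Implicit Defensive.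
Import Order.TTheory GRing.Theory Num.Theory.
Local Open Scope ring_scope.

Section PowerAllocation.
Variables (R : realFieldType) (n : nat).
Variables (p : 'I_n -> R) (F A : 'I_n -> {set 'I_n}).

Lemma xstate_unsafe (U : 'M[R]_n) i :
  (xstate F A U i = Unsafe) <-> sigma F A U i < tau A U i.
Proof. by rewrite /xstate; case: ltgtP. Qed.

Lemma survivesE (U : 'M[R]_n) i :
  survives F A U i <-> tau A U i <= sigma F A U i.
Proof.
rewrite leNgt; split=> [Hs | /negP Hns].
  by apply/negP => /xstate_unsafe; case: Hs => ->.
by case E: (xstate F A U i); [left | right | case: Hns; apply/xstate_unsafe].
Qed.

Lemma admissible_entry_le (U : 'M[R]_n) k j :
  admissible p F A U -> U k j <= p k.
Proof.
case=> U0 _ Us; rewrite -(Us k) (bigD1 j) //= lerDl.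
by apply: sumr_ge0 => l _; apply: U0.
Qed.

Lemma tau_le_adversary_power (U : 'M[R]_n) i :
  admissible p F A U -> tau A U i <= \sum_(j in A i) p j.
Proof. by move=> HU; apply: ler_sum => j _; apply: admissible_entry_le. Qed.

Lemma reserve_le_sigma (U : 'M[R]_n) i :
  admissible p F A U -> U i i <= sigma F A U i.
Proof.
case=> U0 _ _; rewrite /sigma -addrA lerDl.
by apply: addr_ge0; apply: sumr_ge0 => j _; apply: U0.
Qed.

Definition all_in_reserve (U : 'M[R]_n) (i : 'I_n) : 'M[R]_n :=
  \matrix_(k, j) if k == i then (if j == i then p i else 0) else U k j.

Lemma all_in_reserve_diag (U : 'M[R]_n) i : all_in_reserve U i i i = p i.
Proof. by rewrite mxE !eqxx. Qed.

Lemma all_in_reserve_differs (U : 'M[R]_n) i :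
  differs_only_in_row i U (all_in_reserve U i).
Proof. by move=> k j /negbTE Hk; rewrite mxE Hk. Qed.

Lemma all_in_reserve_admissible (U : 'M[R]_n) i :
  (forall k, 0 <= p k) -> admissible p F A U ->
  admissible p F A (all_in_reserve U i).
Proof.
move=> p0 [U0 Uz Us]; split=> [k j | k j Hjk HjF HjA | k]; rewrite ?mxE.
- by case: ifP => _ //; case: ifP.
- by case: (eqVneq k i) => [<- | _]; [rewrite (negbTE Hjk) | apply: Uz].
case: (eqVneq k i) => [-> | Hk].
  rewrite (bigD1 i) //= all_in_reserve_diag big1 ?addr0 // => j /negbTE Hj.
  by rewrite mxE eqxx Hj.
by rewrite -(Us k); apply: eq_bigr => j _; rewrite mxE (negbTE Hk).
Qed.

Lemma survives_all_in_reserve (U : 'M[R]_n) i :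
  admissible p F A (all_in_reserve U i) -> \sum_(j in A i) p j <= p i ->
  survives F A (all_in_reserve U i) i.
Proof.
move=> HV HpA; apply/survivesE.
apply: le_trans (tau_le_adversary_power i HV) _.
by apply: le_trans HpA _; rewrite -{1}(all_in_reserve_diag U i) reserve_le_sigma.
Qed.

Lemma nash_eq_survives_by_reserve (U : 'M[R]_n) i :
  pag_wf p F A -> \sum_(j in A i) p j <= p i -> nash_eq p F A U ->
  survives F A U i.
Proof.
move=> [p0 _] HpA [HU HN]; apply/survivesE; rewrite leNgt; apply/negP => Hunsafe.
have HV := all_in_reserve_admissible i p0 HU.
apply: (HN i _ HV); first exact: all_in_reserve_differs.
by left; split; [apply: survives_all_in_reserve | apply/xstate_unsafe].
Qed.

End PowerAllocation.

Theorem theorem1 (R : realFieldType) (n : nat) (p : 'I_n -> R)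
    (F A : 'I_n -> {set 'I_n}) (n0 : {set 'I_n}) :
  pag_wf p F A ->
  n0 != set0 ->
  (forall i, i \in n0 -> A i :&: n0 = set0 /\ \sum_(j in A i) p j <= p i) ->
  forall U : 'M[R]_n, nash_eq p F A U ->
  forall i, i \in n0 -> tau A U i <= sigma F A U i.
Proof.
move=> Hwf _ Hn0 U HU i /Hn0 [_ HpA].
by apply/survivesE; apply: nash_eq_survives_by_reserve Hwf HpA HU.
Qed.
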